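(* Assume the setting described in the context. Let $f\in\acute{\mathcal J}$ and $g\in\grave{\mathcal J}$ be weight invariants with weights $\widehat f,\widehat g$, and let $s$ be an integer with $0\le s\le\widehat f$, $0\le s\le\widehat g$. Then there is a nonzero real constant $c$ such that $\acute{\mathcal X}^s(f,g)^{(s)}=c\,fg$, and $\acute{\mathcal X}^k(f,g)^{(s)}=0$ for every integer $k>s$.
   Context: For a real square matrix $A_0$ put $\mathcal D_{A_0}f(\mathbf x)=f'(\mathbf x)A_0\mathbf x$. Let $(\acute X,\acute Y,\acute Z)$ and $(\grave X,\grave Y,\grave Z)$ be $\mathfrak{sl}_2$ triads ($[X,Y]=Z,[Z,X]=2X,[Z,Y]=-2Y$) of real $n\times n$ resp. $m\times m$ matrices, with independent variables $\mathbf x\in\mathbb R^n$, $\mathbf y\in\mathbb R^m$. On $\mathbb R[[\mathbf x]]$: $\acute{\mathcal X}=\mathcal D_{\acute Y},\acute{\mathcal Y}=\mathcal D_{\acute X},\acute{\mathcal Z}=\mathcal D_{\acute Z}$; on $\mathbb R[[\mathbf y]]$: $\grave{\mathcal X}=\mathcal D_{\grave Y},\grave{\mathcal Y}=\mathcal D_{\grave X},\grave{\mathcal Z}=\mathcal D_{\grave Z}$; these are extended to $\mathbb R[[\mathbf x,\mathbf y]]$ acting only on the $\mathbf x$ (resp. $\mathbf y$) variables. $\acute{\mathcal J}=\ker\acute{\mathcal X}$, $\grave{\mathcal J}=\ker\grave{\mathcal X}$. A weight invariant is $f\in\acute{\mathcal J}$ with $\acute{\mathcal Z}f=\widehat ff$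 (similarly in $\grave{\mathcal J}$). External transvectant: $(f,g)^{(s)}=\sum_{j=0}^s(-1)^j\binom sj\frac{(\widehat f-j)!}{(\widehat f-s)!}\frac{(\widehat g-s+j)!}{(\widehat g-s)!}(\acute{\mathcal Y}^jf)(\grave{\mathcal Y}^{s-j}g)$. *)

From HB Require Import structures.
From mathcomp Require Import all_boot all_order all_algebra.
From mathcomp Require Import reals.
Set Implicit Arguments. Unset Strict Implicit. Unset Printing Implicit Defensive.
Import Order.TTheory GRing.Theory Num.Theory.
Local Open Scope ring_scope.

Definition mono (n : nat) := {ffun 'I_n -> nat}.

(* a formal power series in R[[x_1..x_n]] = its coefficient function *)
Definition series (R : realType) (n : nat) := mono n -> R.

(* series in R[[x, y]], x in R^n, y in R^m: coefficient of x^a y^b *)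
Definition series2 (R : realType) (n m : nat) := mono n -> mono m -> R.

Definition mono_incr n (a : mono n) (i : 'I_n) : mono n :=
  [ffun k => (a k + (k == i))%N].
Definition mono_decr n (a : mono n) (i : 'I_n) : mono n :=
  [ffun k => (a k - (k == i))%N].

Definition pderiv (R : realType) n (i : 'I_n) (f : series R n) : series R n :=
  fun a => (a i).+1%:R * f (mono_incr a i).

Definition mulvar (R : realType) n (j : 'I_n) (f : series R n) : series R n :=
  fun a => if (0 < a j)%N then f (mono_decr a j) else 0.

(* D_A f (x) = f'(x) A x = sum_{i,j} A_{ij} x_j (d f / d x_i) *)
Definition DA (R : realType) n (A : 'M[R]_n) (f : series R n) : series R n :=
  fun a => \sum_(i < n) \sum_(j < n) A i j * mulvar j (pderiv i f) a.

Definition DA_x (R : realType) n m (A : 'M[R]_n) (F : series2 R n m)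
  : series2 R n m := fun a b => DA A (fun a' => F a' b) a.
Definition DA_y (R : realType) n m (A : 'M[R]_m) (F : series2 R n m)
  : series2 R n m := fun a b => DA A (fun b' => F a b') b.

Definition tens (R : realType) n m (f : series R n) (g : series R m)
  : series2 R n m := fun a b => f a * g b.

Definition sscale (R : realType) n m (c : R) (F : series2 R n m)
  : series2 R n m := fun a b => c * F a b.

Definition sl2_triad (R : realType) n (X Y Z : 'M[R]_n) : Prop :=
  [/\ X *m Y - Y *m X = Z, Z *m X - X *m Z = 2%:R *: X
    & Z *m Y - Y *m Z = - (2%:R *: Y)].

(* external transvectant (f,g)^(s), with acute Y = D_{acute X} on x and
   grave Y = D_{grave X} on y; fw, gw are the weights of f, g. *)
Definition transvectant (R : realType) n m (aX : 'M[R]_n) (gX : 'M[R]_m)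
  (f : series R n) (fw : nat) (g : series R m) (gw : nat) (s : nat)
  : series2 R n m :=
  fun a b => \sum_(j < s.+1)
    (-1) ^+ j * 'C(s, j)%:R
    * ((fw - j)`!%:R / (fw - s)`!%:R)
    * ((gw - s + j)`!%:R / (gw - s)`!%:R)
    * (iter j (DA aX) f a * iter (s - j) (DA gX) g b).

(* The operators D_A are derivations of R[[x]], and A |-> D_A reverses
   commutators: [D_A, D_B] = D_[B,A].  Hence D_{aY}, D_{aX}, D_{aZ} form an
   sl_2 triple acting on R[[x]], and for a highest weight vector f of weight w
   the string of lowered vectors D_{aX}^j f satisfies
   D_{aY} D_{aX}^(j+1) f = (j+1)(w-j) D_{aX}^j f.  Raising D_{aX}^j f k times
   therefore gives a multiple of D_{aX}^(j-k) f, nonzero when k <= j <= w, and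
   zero once k > j.  In the transvectant only the summand j = s survives s
   raisings, and it becomes a nonzero multiple of f g; all summands die after
   more than s raisings. *)
From HB Require Import structures.
From mathcomp Require Import all_boot all_order all_algebra.
From mathcomp Require Import reals.
From mathcomp Require Import ring zify.
From Stdlib Require Import FunctionalExtensionality.
Import Order.TTheory GRing.Theory Num.Theory.
Local Open Scope ring_scope.

Section Monomials.
Context {n : nat}.
Implicit Types (a : mono n) (i k : 'I_n).

Lemma mono_incrC a i k : mono_incr (mono_incr a i) k = mono_incr (mono_incr a k) i.
Proof. by apply/ffunP => x; rewrite !ffunE addnAC. Qed.

Lemma mono_decrC a i k : mono_decr (mono_decr a i) k = mono_decr (mono_decr a k) i.
Proof. by apply/ffunP => x; rewrite !ffunE subnAC. Qed.

Lemma mono_incrK a i : mono_decr (mono_incr a i) i = a.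
Proof. by apply/ffunP => x; rewrite !ffunE addnK. Qed.

Lemma mono_decrK a i : (0 < a i)%N -> mono_incr (mono_decr a i) i = a.
Proof.
by move=> ai_gt0; apply/ffunP => x; rewrite !ffunE; case: eqP => [->|] //=; rewrite subnK.
Qed.

Lemma mono_incr_neq a i k : i != k -> mono_incr a i k = a k.
Proof. by move=> neq_ik; rewrite ffunE eq_sym (negbTE neq_ik) addn0. Qed.

Lemma mono_decr_neq a i k : i != k -> mono_decr a i k = a k.
Proof. by move=> neq_ik; rewrite ffunE eq_sym (negbTE neq_ik) subn0. Qed.

Lemma mono_decr_incr a i k : i != k ->
  mono_decr (mono_incr a i) k = mono_incr (mono_decr a k) i.
Proof.
move=> neq_ik; apply/ffunP => x; rewrite !ffunE.
case: (x =P i) => [xi|_]; case: (x =P k) => [xk|_] //=; rewrite ?subn0 ?addn0 //.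
by move: neq_ik; rewrite -xi -xk eqxx.
Qed.

End Monomials.

Section Derivations.
Context {R : realType} {n : nat}.
Implicit Types (F G : series R n) (i j k l : 'I_n) (c : R) (A B : 'M[R]_n).

Lemma pderivC i k F : pderiv i (pderiv k F) = pderiv k (pderiv i F).
Proof.
apply: functional_extensionality => a; rewrite /pderiv.
case: (i =P k) => [->|/eqP neq_ik] //.
rewrite !mono_incr_neq // 1?eq_sym // mono_incrC.
by rewrite mulrCA.
Qed.

Lemma mulvarC j l F : mulvar j (mulvar l F) = mulvar l (mulvar j F).
Proof.
apply: functional_extensionality => a; rewrite /mulvar.
case: (j =P l) => [->|/eqP neq_jl] //.
rewrite !mono_decr_neq // 1?eq_sym // mono_decrC.
by case: (0 < a j)%N; case: (0 < a l)%N.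
Qed.

Lemma pderiv_mulvar i l F :
  pderiv i (mulvar l F) = fun a => mulvar l (pderiv i F) a + (i == l)%:R * F a.
Proof.
apply: functional_extensionality => a; rewrite /pderiv /mulvar.
case: (i =P l) => [<-|/eqP neq_il].
  rewrite ffunE eqxx addn1 /= mono_incrK mul1r.
  have [ai0|ai_gt0] := posnP (a i); first by rewrite ai0 add0r mul1r.
  rewrite mono_decrK // ffunE eqxx subn1 prednK //.
  by rewrite -[(a i).+1]addn1 natrD mulrDl mul1r.
rewrite mono_incr_neq // mul0r addr0 mono_decr_incr // mono_decr_neq 1?eq_sym //.
by case: (0 < a l)%N; rewrite ?mulr0.
Qed.

Lemma pderiv_sum (I : finType) (H : I -> series R n) i :
  pderiv i (fun a => \sum_t H t a) = fun a => \sum_t pderiv i (H t) a.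
Proof. by apply: functional_extensionality => a; rewrite /pderiv mulr_sumr. Qed.

Lemma mulvar_sum (I : finType) (H : I -> series R n) j :
  mulvar j (fun a => \sum_t H t a) = fun a => \sum_t mulvar j (H t) a.
Proof.
by apply: functional_extensionality => a; rewrite /mulvar; case: ifP => // _; rewrite big1.
Qed.

Lemma pderivZ c F i : pderiv i (fun a => c * F a) = fun a => c * pderiv i F a.
Proof. by apply: functional_extensionality => a; rewrite /pderiv mulrCA. Qed.

Lemma mulvarZ c F j : mulvar j (fun a => c * F a) = fun a => c * mulvar j F a.
Proof. by apply: functional_extensionality => a; rewrite /mulvar; case: ifP; rewrite ?mulr0. Qed.

Lemma mulvarD F G j :
  mulvar j (fun a => F a + G a) = fun a => mulvar j F a + mulvar j G a.
Proof. by apply: functional_extensionality => a; rewrite /mulvar; case: ifP; rewrite ?addr0. Qed.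

Lemma DA_lincomb A (N : nat) (c : 'I_N -> R) (H : 'I_N -> series R n) :
  DA A (fun a => \sum_(t < N) c t * H t a) = fun a => \sum_(t < N) c t * DA A (H t) a.
Proof.
apply: functional_extensionality => a; rewrite /DA.
under eq_bigr => i _ do under eq_bigr => j _ do
  rewrite pderiv_sum mulvar_sum big_distrr.
under eq_bigr => i _ do rewrite exchange_big /=.
rewrite exchange_big /=; apply: eq_bigr => t _.
rewrite big_distrr; apply: eq_bigr => i _; rewrite big_distrr; apply: eq_bigr => j _ /=.
by rewrite pderivZ mulvarZ mulrCA.
Qed.

Lemma DAZ A c F : DA A (fun a => c * F a) = fun a => c * DA A F a.
Proof.
apply: functional_extensionality => a; rewrite /DA big_distrr.
apply: eq_bigr => i _; rewrite big_distrr; apply: eq_bigr => j _.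
by rewrite pderivZ mulvarZ mulrCA.
Qed.

Lemma DA0 A : DA A (fun _ => 0) = (fun _ => 0 : R).
Proof.
have -> : (fun _ : mono n => 0 : R) = fun a => 0 * (fun _ => 0 : R) a.
  by apply: functional_extensionality => a; rewrite mul0r.
by rewrite DAZ; apply: functional_extensionality => a; rewrite !mul0r.
Qed.

Lemma iter_DA0 A (k : nat) : iter k (DA A) (fun _ => 0) = (fun _ => 0 : R).
Proof. by elim: k => //= k ->; rewrite DA0. Qed.

Lemma DA_scalemx A c F a : DA (c *: A) F a = c * DA A F a.
Proof.
rewrite /DA big_distrr; apply: eq_bigr => i _; rewrite big_distrr.
by apply: eq_bigr => j _; rewrite mxE /= mulrA.
Qed.

Lemma DA_submx A B F a : DA (A - B) F a = DA A F a - DA B F a.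
Proof.
rewrite /DA -sumrB; apply: eq_bigr => i _; rewrite -sumrB.
by apply: eq_bigr => j _; rewrite !mxE mulrBl.
Qed.

Lemma mulvar_pderiv_DA B F i j a :
  mulvar j (pderiv i (DA B F)) a =
  \sum_k \sum_l B k l * (mulvar j (mulvar l (pderiv i (pderiv k F))) a
                         + (i == l)%:R * mulvar j (pderiv k F) a).
Proof.
rewrite /DA pderiv_sum mulvar_sum; apply: eq_bigr => k _.
rewrite pderiv_sum mulvar_sum; apply: eq_bigr => l _.
by rewrite pderivZ mulvarZ pderiv_mulvar mulvarD mulvarZ.
Qed.

Lemma sum_delta_mul (g : 'I_n -> R) i : \sum_l (i == l)%:R * g l = g i.
Proof.
rewrite (bigD1 i) //= eqxx mul1r big1 ?addr0 // => l.
by rewrite eq_sym => /negbTE ->; rewrite mul0r.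
Qed.

Lemma sum3_rev (g : 'I_n -> 'I_n -> 'I_n -> R) :
  \sum_i \sum_j \sum_k g i j k = \sum_k \sum_j \sum_i g i j k.
Proof.
rewrite exchange_big /=; under eq_bigr => j _ do rewrite exchange_big /=.
by rewrite exchange_big.
Qed.

Lemma sum4_swap (g : 'I_n -> 'I_n -> 'I_n -> 'I_n -> R) :
  \sum_i \sum_j \sum_k \sum_l g i j k l = \sum_k \sum_l \sum_i \sum_j g i j k l.
Proof.
under eq_bigr => i _ do under eq_bigr => j _ do rewrite pair_big /=.
rewrite pair_big /=.
under [RHS]eq_bigr => k _ do under eq_bigr => l _ do rewrite pair_big /=.
by rewrite [RHS]pair_big /= exchange_big.
Qed.

(* The second order part of D_A D_B is symmetric in A and B; the first order
   part, coming from the Leibniz rule, is D_{BA}. *)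
Lemma DA_DA A B F a :
  DA A (DA B F) a =
  \sum_i \sum_j \sum_k \sum_l A i j * B k l * mulvar j (mulvar l (pderiv i (pderiv k F))) a
  + DA (B *m A) F a.
Proof.
have term i j : A i j * mulvar j (pderiv i (DA B F)) a =
    \sum_k \sum_l A i j * B k l * mulvar j (mulvar l (pderiv i (pderiv k F))) a
    + \sum_k A i j * B k i * mulvar j (pderiv k F) a.
  rewrite mulvar_pderiv_DA big_distrr -big_split /=; apply: eq_bigr => k _.
  rewrite big_distrr -[in RHS](sum_delta_mul (fun l => A i j * B k l * _) i).
  by rewrite -big_split /=; apply: eq_bigr => l _; ring.
rewrite {1}/DA; under eq_bigr => i _ do under eq_bigr => j _ do rewrite term.
under eq_bigr => i _ do rewrite big_split /=.
rewrite big_split /=; congr (_ + _).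
rewrite sum3_rev /DA; apply: eq_bigr => k _; apply: eq_bigr => j _.
by rewrite mxE big_distrl /=; apply: eq_bigr => i _; ring.
Qed.

Lemma DA_commutator A B F :
  DA A (DA B F) = fun a => DA B (DA A F) a + DA (B *m A - A *m B) F a.
Proof.
apply: functional_extensionality => a; rewrite !DA_DA DA_submx.
have -> : \sum_i \sum_j \sum_k \sum_l B i j * A k l * mulvar j (mulvar l (pderiv i (pderiv k F))) a
        = \sum_i \sum_j \sum_k \sum_l A i j * B k l * mulvar j (mulvar l (pderiv i (pderiv k F))) a.
  rewrite sum4_swap; do 4! apply: eq_bigr => ? _.
  by rewrite [B _ _ * _]mulrC mulvarC pderivC.
by rewrite -addrA [_ + (_ - _)]addrC subrK.
Qed.

End Derivations.

Section HighestWeightString.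
Context {R : realType} {n : nat} {X Y Z : 'M[R]_n} {f : series R n} {w : nat}.
Hypotheses (XY_Z : X *m Y - Y *m X = Z) (ZX_X : Z *m X - X *m Z = 2%:R *: X).
Hypotheses (DA_Y_f : DA Y f = (fun _ => 0)) (DA_Z_f : DA Z f = (fun a => w%:R * f a)).

Lemma DA_Z_iter_X (j : nat) :
  DA Z (iter j (DA X) f) = fun a => (w%:R - 2%:R * j%:R) * iter j (DA X) f a.
Proof.
elim: j => [|j IH].
  by rewrite /= DA_Z_f; apply: functional_extensionality => a; rewrite mulr0 subr0.
rewrite iterS DA_commutator -opprB ZX_X IH DAZ.
apply: functional_extensionality => a.
rewrite -scaleNr DA_scalemx -[j.+1]addn1 natrD; ring.
Qed.

Lemma DA_Y_iter_X (j : nat) :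
  DA Y (iter j.+1 (DA X) f) = fun a => (j.+1%:R * (w%:R - j%:R)) * iter j (DA X) f a.
Proof.
elim: j => [|j IH].
  rewrite /= DA_commutator XY_Z DA_Y_f DA0 DA_Z_f.
  by apply: functional_extensionality => a; rewrite add0r mul1r subr0.
rewrite iterS DA_commutator XY_Z IH DAZ DA_Z_iter_X.
apply: functional_extensionality => a.
rewrite -iterS -[j.+2]addn1 -[j.+1]addn1 !natrD; ring.
Qed.

(* The constant is a product of the factors (i+1)(w-i), i < j, none of which
   vanishes while j <= w. *)
Lemma iter_DA_Y_iter_X (k j : nat) : (k <= j)%N -> exists c : R,
  ((j <= w)%N -> c != 0) /\
  iter k (DA Y) (iter j (DA X) f) = fun a => c * iter (j - k) (DA X) f a.
Proof.
elim: k => [|k IH] le_kj.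
  exists 1; split=> [_|]; first exact: oner_neq0.
  by apply: functional_extensionality => a; rewrite subn0 mul1r.
have [c [c_neq0 Yk]] := IH (ltnW le_kj).
rewrite iterS Yk (_ : j - k = (j - k.+1).+1)%N; last by lia.
rewrite DAZ DA_Y_iter_X.
exists (c * ((j - k.+1).+1%:R * (w%:R - (j - k.+1)%:R))); split.
  move=> le_jw; have lt_w : (j - k.+1 < w)%N by lia.
  rewrite !mulf_neq0 ?c_neq0 ?pnatr_eq0 //.
  by rewrite -natrB ?(ltnW lt_w) // pnatr_eq0 subn_eq0 -ltnNge.
by apply: functional_extensionality => a; rewrite mulrA.
Qed.

Lemma iter_DA_Y_iter_X_eq0 (k j : nat) : (j < k)%N ->
  iter k (DA Y) (iter j (DA X) f) = fun _ => 0.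
Proof.
move=> lt_jk; have [c [_ Yj]] := iter_DA_Y_iter_X j j (leqnn j).
rewrite subnn /= in Yj.
have -> : k = ((k - j.+1) + 1 + j)%N by lia.
rewrite !iterD Yj /= DAZ DA_Y_f.
have -> : (fun a : mono n => c * 0) = (fun _ => 0 : R).
  by apply: functional_extensionality => a; rewrite mulr0.
exact: iter_DA0.
Qed.

End HighestWeightString.

Lemma iter_DA_x_lincomb {R : realType} {n m : nat} (A : 'M[R]_n) (N k : nat)
    (c : 'I_N -> R) (F : 'I_N -> series R n) (G : 'I_N -> series R m) :
  iter k (DA_x A) (fun a b => \sum_(t < N) c t * (F t a * G t b)) =
  fun a b => \sum_(t < N) c t * (iter k (DA A) (F t) a * G t b).
Proof.
elim: k => [|k IH] //=; rewrite IH.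
apply: functional_extensionality => a; apply: functional_extensionality => b.
rewrite /DA_x.
have -> : (fun a' => \sum_(t < N) c t * (iter k (DA A) (F t) a' * G t b)) =
    fun a' => \sum_(t < N) (c t * G t b) * iter k (DA A) (F t) a'.
  by apply: functional_extensionality => a'; apply: eq_bigr => t _; ring.
by rewrite DA_lincomb; apply: eq_bigr => t _; ring.
Qed.

Definition transvectant_coef {R : realType} (fw gw s j : nat) : R :=
  (-1) ^+ j * 'C(s, j)%:R * ((fw - j)`!%:R / (fw - s)`!%:R)
  * ((gw - s + j)`!%:R / (gw - s)`!%:R).

Lemma transvectantE {R : realType} {n m : nat} (aX : 'M[R]_n) (gX : 'M[R]_m)
    (f : series R n) (fw : nat) (g : series R m) (gw s : nat) :
  transvectant aX gX f fw g gw s = fun a b =>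
    \sum_(j < s.+1) transvectant_coef fw gw s j
                    * (iter j (DA aX) f a * iter (s - j) (DA gX) g b).
Proof. by []. Qed.

Lemma transvectant_coef_neq0 {R : realType} (fw gw s : nat) :
  transvectant_coef fw gw s s != 0 :> R.
Proof.
rewrite /transvectant_coef binn.
by repeat apply: mulf_neq0;
  rewrite ?signr_eq0 ?invr_eq0 ?oner_neq0 ?pnatr_eq0 -?lt0n ?fact_gt0.
Qed.

Theorem lemma7p3 (R : realType) (n m : nat)
  (aX aY aZ : 'M[R]_n) (gX gY gZ : 'M[R]_m)
  (f : series R n) (g : series R m) (fw gw s : nat) :
  sl2_triad aX aY aZ -> sl2_triad gX gY gZ ->
  (* f in acute J = ker acute X = ker D_{acute Y}, weight fw *)
  DA aY f = (fun _ => 0) -> DA aZ f = (fun a => fw%:R * f a) ->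
  (* g in grave J = ker grave X = ker D_{grave Y}, weight gw *)
  DA gY g = (fun _ => 0) -> DA gZ g = (fun b => gw%:R * g b) ->
  (s <= fw)%N -> (s <= gw)%N ->
  exists c : R, c != 0 /\
    iter s (DA_x aY) (transvectant aX gX f fw g gw s) = sscale c (tens f g) /\
    (forall k : nat, (s < k)%N ->
       iter k (DA_x aY) (transvectant aX gX f fw g gw s) = (fun _ _ => 0)).
Proof.
move=> [XY_Z ZX_X _] _ DA_Y_f DA_Z_f _ _ le_s_fw _.
have [c [c_neq0 Ys]] := iter_DA_Y_iter_X XY_Z ZX_X DA_Y_f DA_Z_f s s (leqnn s).
rewrite subnn /= in Ys.
have vanish (k j : nat) : (j < k)%N ->
    iter k (DA aY) (iter j (DA aX) f) = fun _ => 0.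
  exact: iter_DA_Y_iter_X_eq0 XY_Z ZX_X DA_Y_f DA_Z_f k j.
exists (transvectant_coef fw gw s s * c); split.
  by rewrite mulf_neq0 ?transvectant_coef_neq0 ?(c_neq0 le_s_fw).
rewrite transvectantE; split=> [|k lt_sk]; rewrite iter_DA_x_lincomb.
  apply: functional_extensionality => a; apply: functional_extensionality => b.
  rewrite big_ord_recr /= Ys subnn big1 ?add0r => [|j _]; last first.
    by rewrite vanish ?mul0r ?mulr0.
  by rewrite /sscale /tens /=; ring.
apply: functional_extensionality => a; apply: functional_extensionality => b.
by rewrite big1 // => j _; rewrite vanish ?mul0r ?mulr0 // (leq_trans _ lt_sk).
Qed.
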